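(* Let $\{1,\mu_1,\mu_2,\mu_3\}$ be a quaternion basis ($\mu_1,\mu_2$ orthogonal pure unit quaternions, $\mu_3=\mu_1\mu_2$), and let $q=z_1+z_2\mu_2$ with $z_1,z_2$ random variables in $\mathbb{C}_{\mu_1}$ be a centered quaternion Gaussian random variable which is $(\mu_1,1)$-proper, i.e. $q\stackrel{d}{=}\mu_1 q$. Let ${\bf q}_{\mathbb{C}}=[z_1,z_1^{\star},z_2,z_2^{\star}]^T$. Then $$\mathbb{E}[{\bf q}_{\mathbb{C}}{\bf q}_{\mathbb{C}}^{\dagger}]=\begin{bmatrix}\sigma^2 & 0 & \omega & 0\\ 0 & \sigma^2 & 0 & \omega^{\star}\\ \omega^{\star} & 0 & \varsigma^2 & 0\\ 0 & \omega & 0 & \varsigma^2\end{bmatrix},$$ where $\sigma^2=\mathbb{E}[|z_1|^2]\in\mathbb{R}$, $\varsigma^2=\mathbb{E}[|z_2|^2]\in\mathbb{R}$ and $\omega=\mathbb{E}[z_1z_2^{\star}]\in\mathbb{C}_{\mu_1}$.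
   Context: $\mathbb{H}$ denotes the quaternions; $\mathbb{C}_{\mu_1}=\mathbb{R}\oplus\mu_1\mathbb{R}$ is the commutative subfield isomorphic to $\mathbb{C}$; $^{\star}$ denotes conjugation and $\dagger$ conjugate transpose. A quaternion Gaussian random variable is one whose four real components are jointly Gaussian; centered means $\mathbb{E}[q]=0$. $\stackrel{d}{=}$ denotes equality in distribution. *)

From HB Require Import structures.
From mathcomp Require Import all_boot all_order all_algebra.
From mathcomp Require Import all_classical all_reals all_analysis.
Set Implicit Arguments. Unset Strict Implicit. Unset Printing Implicit Defensive.
Import Order.TTheory GRing.Theory Num.Theory.
Local Open Scope classical_set_scope.
Local Open Scope ring_scope.

Record quat (R : Type) := Quat { qr : R; qi : R; qj : R; qk : R }.
Arguments qr {R}. Arguments qi {R}. Arguments qj {R}. Arguments qk {R}. Arguments Quat {R}.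

Section Quat.
Variable R : realType.
Definition qzero : quat R := Quat 0 0 0 0.
Definition qreal (a : R) : quat R := Quat a 0 0 0.
Definition qadd (p q : quat R) : quat R :=
  Quat (qr p + qr q) (qi p + qi q) (qj p + qj q) (qk p + qk q).
Definition qscale (a : R) (p : quat R) : quat R :=
  Quat (a * qr p) (a * qi p) (a * qj p) (a * qk p).
Definition qmul (p q : quat R) : quat R :=
  Quat (qr p * qr q - qi p * qi q - qj p * qj q - qk p * qk q)
       (qr p * qi q + qi p * qr q + qj p * qk q - qk p * qj q)
       (qr p * qj q - qi p * qk q + qj p * qr q + qk p * qi q)
       (qr p * qk q + qi p * qj q - qj p * qi q + qk p * qr q).
Definition qconj (p : quat R) : quat R := Quat (qr p) (- qi p) (- qj p) (- qk p).
Definition qdot (p q : quat R) : R :=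
  qr p * qr q + qi p * qi q + qj p * qj q + qk p * qk q.
Definition qnorm2 (p : quat R) : R := qdot p p.
Definition pure (p : quat R) : Prop := qr p = 0.
Definition unit_quat (p : quat R) : Prop := qnorm2 p = 1.
Definition quat_basis (mu1 mu2 : quat R) : Prop :=
  [/\ pure mu1, pure mu2, unit_quat mu1, unit_quat mu2 & qdot mu1 mu2 = 0].
Definition in_Cmu (mu1 p : quat R) : Prop :=
  exists a b : R, p = qadd (qreal a) (qscale b mu1).
Definition vec4 (p : quat R) : (R * R) * (R * R) := ((qr p, qi p), (qj p, qk p)).
End Quat.

Section Prob.
Context {d : measure_display} {T : measurableType d} {R : realType}.
Variable P : probability T R.

Definition quat_rv (X : T -> quat R) : Prop :=
  [/\ measurable_fun setT (qr \o X), measurable_fun setT (qi \o X),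
      measurable_fun setT (qj \o X) & measurable_fun setT (qk \o X)].

Definition real_gaussian (X : T -> R) : Prop :=
  exists m s : R,
    (s = 0 /\ forall A, measurable A -> P (X @^-1` A) = \d_m A) \/
    (0 < s /\ forall A, measurable A -> P (X @^-1` A) = normal_prob m s A).

(** the four real components are jointly Gaussian: every real linear
    combination of them is Gaussian *)
Definition quat_gaussian (X : T -> quat R) : Prop :=
  quat_rv X /\ forall c0 c1 c2 c3 : R,
    real_gaussian (fun w => c0 * qr (X w) + c1 * qi (X w)
                            + c2 * qj (X w) + c3 * qk (X w)).

Definition qexpect (X : T -> quat R) : quat R :=
  Quat (fine ('E_P[qr \o X])%E) (fine ('E_P[qi \o X])%E)
       (fine ('E_P[qj \o X])%E) (fine ('E_P[qk \o X])%E).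

Definition centered (X : T -> quat R) : Prop :=
  [/\ ('E_P[qr \o X] = 0)%E, ('E_P[qi \o X] = 0)%E,
      ('E_P[qj \o X] = 0)%E & ('E_P[qk \o X] = 0)%E].

Definition quat_eq_dist (X Y : T -> quat R) : Prop :=
  forall A : set ((R * R) * (R * R)), measurable A ->
    P ((@vec4 R \o X) @^-1` A) = P ((@vec4 R \o Y) @^-1` A).
End Prob.

From HB Require Import structures.
From mathcomp Require Import all_boot all_order all_algebra.
From mathcomp Require Import all_classical all_reals all_analysis.
From mathcomp Require Import measurable_realfun.
From mathcomp Require Import ring lra.
Set Implicit Arguments. Unset Strict Implicit. Unset Printing Implicit Defensive.
Import Order.TTheory GRing.Theory Num.Theory.
Local Open Scope classical_set_scope.
Local Open Scope ring_scope.

(** Write q in the basis {1, mu1, mu2, mu1 mu2}: its coordinates are the real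
    and imaginary parts (a, b, c, e) of z1 = a + b mu1 and z2 = c + e mu1.
    Left multiplication by mu1 acts on these coordinates as multiplication by
    the imaginary unit on C^2, so properness says that the law of (z1, z2) is
    invariant under (z1, z2) |-> (i z1, i z2).  Each entry (i, j) of
    E[q_C q_C^H] is the expectation of a quadratic form in the coordinates,
    and when i + j is odd this form changes sign under the rotation, so its
    expectation vanishes.  The other entries agree pointwise with |z1|^2,
    |z2|^2, z1 z2^* or its conjugate. *)

Lemma fine_subeC (R : realType) (x y : \bar R) : fine (x - y)%E = - fine (y - x)%E.
Proof. by case: x => [x||]; case: y => [y||] //=; rewrite ?oppr0 // opprB. Qed.

Lemma fine_muleBr_ge0 (R : realType) (k : R) (x y : \bar R) : 0 <= k ->
  fine (k%:E * x - k%:E * y)%E = k * fine (x - y)%E.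
Proof.
rewrite le_eqVlt => /predU1P[<-|k0]; first by rewrite !mul0e subee // mul0r.
by case: x => [x||]; case: y => [y||] //=;
  rewrite ?gt0_muley ?gt0_muleNy ?lte_fin //= ?mulr0 // mulrBr.
Qed.

Section fine_expectation.
Context d (T : measurableType d) (R : realType) (P : probability T R).

Lemma fine_expectationN (f : T -> R) :
  fine 'E_P[fun w => - f w] = - fine 'E_P[f].
Proof.
rewrite unlock integralE [in RHS]integralE.
have -> : (fun w => (- f w)%:E) = (\- (EFin \o f))%E by apply/funext => w; rewrite EFinN.
by rewrite funeposN funenegN fine_subeC.
Qed.

Lemma fine_expectationZ (f : T -> R) (k : R) : measurable_fun setT f ->
  fine 'E_P[fun w => k * f w] = k * fine 'E_P[f].
Proof.
move=> mf; wlog k0 : k / 0 <= k.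
  move=> ge0Z; have [/ge0Z//|/ltW] := leP 0 k.
  rewrite -oppr_ge0 => /ge0Z kfE.
  have -> : (fun w => k * f w) = (fun w => - (- k * f w)).
    by apply/funext => w; rewrite mulNr opprK.
  by rewrite fine_expectationN kfE mulNr opprK.
rewrite unlock integralE [in RHS]integralE.
have -> : (fun w => (k * f w)%:E) = (fun w => k%:E * (f w)%:E)%E.
  by apply/funext => w; rewrite EFinM.
have mfE : measurable_fun setT (fun w => (f w)%:E) by exact/measurable_EFinP.
rewrite ge0_funeposM // ge0_funenegM // !ge0_integralZl_EFin //.
- exact: fine_muleBr_ge0.
- exact: measurable_funeneg.
- exact: measurable_funepos.
Qed.

End fine_expectation.

Section law_invariance.
Context d (T : measurableType d) (R : realType) (P : probability T R).
Context d' (Y : measurableType d').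
Variables (U V : T -> Y).
Hypotheses (mU : measurable_fun setT U) (mV : measurable_fun setT V).
Hypothesis UV_law : forall A, measurable A -> P (U @^-1` A) = P (V @^-1` A).

Lemma ge0_integral_comp_eq_law (G : Y -> \bar R) :
  measurable_fun setT G -> (forall y, (0 <= G y)%E) ->
  (\int[P]_w G (U w) = \int[P]_w G (V w))%E.
Proof.
move=> mG G0.
have pushU := ge0_integral_pushforward mU P measurableT mG (fun y _ => G0 y).
have pushV := ge0_integral_pushforward mV P measurableT mG (fun y _ => G0 y).
rewrite !preimage_setT in pushU pushV.
rewrite -pushU -pushV; apply: eq_measure_integral => A mA _.
exact: UV_law.
Qed.

Lemma expectation_comp_eq_law (g : Y -> R) : measurable_fun setT g ->
  ('E_P[g \o U] = 'E_P[g \o V])%E.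
Proof.
move=> mg; rewrite unlock integralE [RHS]integralE.
have mgE : measurable_fun setT (EFin \o g) by exact/measurable_EFinP.
have -> : (fun w => ((g \o U) w)%:E) = EFin \o g \o U by [].
have -> : (fun w => ((g \o V) w)%:E) = EFin \o g \o V by [].
rewrite (funepos_comp _ U) (funeneg_comp _ U) (funepos_comp _ V) (funeneg_comp _ V).
rewrite (ge0_integral_comp_eq_law (measurable_funepos mgE)) ?funepos_ge0 //.
by rewrite (ge0_integral_comp_eq_law (measurable_funeneg mgE)) ?funeneg_ge0.
Qed.

End law_invariance.

Lemma fine_expectation_odd d (T : measurableType d) (R : realType)
    (P : probability T R) d' (Y : measurableType d') (U : T -> Y) (s : Y -> Y) (h : Y -> R) :
  measurable_fun setT U -> measurable_fun setT s -> measurable_fun setT h ->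
  (forall A, measurable A -> P (U @^-1` A) = P ((s \o U) @^-1` A)) ->
  (forall y, h (s y) = - h y) ->
  fine 'E_P[h \o U] = 0.
Proof.
move=> mU ms mh Us_law h_odd.
have : fine 'E_P[h \o U] = - fine 'E_P[h \o U].
  rewrite {1}(expectation_comp_eq_law mU (measurableT_comp ms mU) Us_law mh).
  rewrite -fine_expectationN; congr (fine 'E_P[_]).
  by apply/funext => w /=; rewrite h_odd.
lra.
Qed.

Section complex_pairs.
Context {R : comRingType}.

(* A pair (a, b) stands for the complex number a + b i; [cmu] below sends it to
   a + b mu1. *)

Definition conjC (u : R * R) : R * R := (u.1, - u.2).
Definition mulI (u : R * R) : R * R := (- u.2, u.1).
Definition mul_conjC (u v : R * R) : R * R :=
  (u.1 * v.1 + u.2 * v.2, u.2 * v.1 - u.1 * v.2).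

Definition mulI2 (y : (R * R) * (R * R)) := (mulI y.1, mulI y.2).
Definition augmentC (y : (R * R) * (R * R)) : seq (R * R) :=
  [:: y.1; conjC y.1; y.2; conjC y.2].
Definition gram (i j : nat) (y : (R * R) * (R * R)) : R * R :=
  mul_conjC (nth (0, 0) (augmentC y) i) (nth (0, 0) (augmentC y) j).

Lemma gramC i j y : gram j i y = conjC (gram i j y).
Proof. by rewrite /gram /mul_conjC /conjC /=; congr pair; ring. Qed.

(* Rotating by i multiplies the entries of [augmentC] by i, and the conjugated
   ones by -i; so u * conj v picks up a factor -1 exactly when one of the two
   entries is conjugated, i.e. when i + j is odd. *)
Lemma gram_mulI2_odd i j y : odd (i + j) ->
  gram i j (mulI2 y) = (- (gram i j y).1, - (gram i j y).2).
Proof.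
case: y => [[a b] [c e]]; rewrite /gram /mulI2 /mulI /mul_conjC.
by case: i => [|[|[|[|i]]]]; case: j => [|[|[|[|j]]]] //= _;
  rewrite ?nth_nil /=; congr pair; ring.
Qed.

End complex_pairs.

Lemma qmul_conj (R : realType) (p : quat R) : qmul p (qconj p) = qreal (qnorm2 p).
Proof. by case: p => a b c e; rewrite /qmul /qreal /qnorm2 /qdot /=; congr Quat; ring. Qed.

Section quaternion_coordinates.
Context {R : realType}.
Variables mu1 mu2 : quat R.
Hypotheses (mu1_pure : pure mu1) (mu1_unit : unit_quat mu1).

Definition cmu (u : R * R) : quat R := qadd (qreal u.1) (qscale u.2 mu1).

Lemma cmu0 : cmu (0, 0) = qzero R.
Proof. by rewrite /cmu /qadd /qreal /qscale /qzero /=; congr Quat; ring. Qed.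

Lemma qconj_cmu u : qconj (cmu u) = cmu (conjC u).
Proof.
by rewrite /cmu /qconj /qadd /qreal /qscale /= mu1_pure; congr Quat; ring.
Qed.

Lemma qmul_cmu_conj u v : qmul (cmu u) (qconj (cmu v)) = cmu (mul_conjC u v).
Proof.
have -> : qmul (cmu u) (qconj (cmu v)) =
    cmu (u.1 * v.1 + u.2 * v.2 * qnorm2 mu1, u.2 * v.1 - u.1 * v.2).
  rewrite /cmu /qmul /qconj /qadd /qreal /qscale /qnorm2 /qdot /= mu1_pure.
  by congr Quat; ring.
by rewrite mu1_unit mulr1.
Qed.

Definition basis_coord (x : quat R) : (R * R) * (R * R) :=
  ((qr x, qdot x mu1), (qdot x mu2, qdot x (qmul mu1 mu2))).

Lemma basis_coord_mul_mu1 x : basis_coord (qmul mu1 x) = mulI2 (basis_coord x).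
Proof.
rewrite /basis_coord /mulI2 /mulI /=.
have -> : qdot (qmul mu1 x) mu1 = qnorm2 mu1 * qr x.
  by rewrite /qmul /qnorm2 /qdot /= mu1_pure; ring.
have -> : qdot (qmul mu1 x) (qmul mu1 mu2) = qnorm2 mu1 * qdot x mu2.
  by rewrite /qmul /qnorm2 /qdot /= mu1_pure; ring.
rewrite mu1_unit !mul1r; congr ((_, _), (_, _)).
- by rewrite /qmul /qdot /= mu1_pure; ring.
- by rewrite /qmul /qdot /= mu1_pure; ring.
Qed.

Hypotheses (mu2_pure : pure mu2) (mu2_unit : unit_quat mu2).
Hypothesis mu12_orth : qdot mu1 mu2 = 0.

Lemma basis_coord_decomp u v : basis_coord (qadd (cmu u) (qmul (cmu v) mu2)) = (u, v).
Proof.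
rewrite /basis_coord; set x := qadd _ _.
have -> : qr x = u.1 - v.2 * qdot mu1 mu2.
  by rewrite /x /cmu /qmul /qadd /qreal /qscale /qdot /= mu1_pure mu2_pure; ring.
have -> : qdot x mu1 = u.2 * qnorm2 mu1 + v.1 * qdot mu1 mu2.
  by rewrite /x /cmu /qmul /qadd /qreal /qscale /qnorm2 /qdot /= mu1_pure mu2_pure; ring.
have -> : qdot x mu2 = u.2 * qdot mu1 mu2 + v.1 * qnorm2 mu2.
  by rewrite /x /cmu /qmul /qadd /qreal /qscale /qnorm2 /qdot /= mu1_pure mu2_pure; ring.
have -> : qdot x (qmul mu1 mu2) =
    - u.1 * qdot mu1 mu2 + v.2 * (qnorm2 mu1 * qnorm2 mu2).
  by rewrite /x /cmu /qmul /qadd /qreal /qscale /qnorm2 /qdot /= mu1_pure mu2_pure; ring.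
rewrite mu1_unit mu2_unit mu12_orth; clear x.
by case: u v => [a b] [c e] /=; congr ((_, _), (_, _)); ring.
Qed.

Lemma in_Cmu_basis_coord z1 z2 : in_Cmu mu1 z1 -> in_Cmu mu1 z2 ->
  z1 = cmu (basis_coord (qadd z1 (qmul z2 mu2))).1 /\
  z2 = cmu (basis_coord (qadd z1 (qmul z2 mu2))).2.
Proof.
move=> [a [b ->]] [c [e ->]].
by rewrite -[qadd (qreal a) _]/(cmu (a, b)) -[qadd (qreal c) _]/(cmu (c, e)) basis_coord_decomp.
Qed.

End quaternion_coordinates.

Section coordinate_measurability.
Context {R : realType}.

Lemma measurable_conjC : measurable_fun setT (@conjC R).
Proof. exact: measurable_fun_pair measurable_fst (measurable_funN measurable_snd). Qed.

Lemma measurable_mulI : measurable_fun setT (@mulI R).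
Proof. exact: measurable_fun_pair (measurable_funN measurable_snd) measurable_fst. Qed.

Let measurable_p11 : measurable_fun setT (fun p : (R * R) * (R * R) => p.1.1).
Proof. exact: measurableT_comp measurable_fst measurable_fst. Qed.
Let measurable_p12 : measurable_fun setT (fun p : (R * R) * (R * R) => p.1.2).
Proof. exact: measurableT_comp measurable_snd measurable_fst. Qed.
Let measurable_p21 : measurable_fun setT (fun p : (R * R) * (R * R) => p.2.1).
Proof. exact: measurableT_comp measurable_fst measurable_snd. Qed.
Let measurable_p22 : measurable_fun setT (fun p : (R * R) * (R * R) => p.2.2).
Proof. exact: measurableT_comp measurable_snd measurable_snd. Qed.

Lemma measurable_mul_conjC :
  measurable_fun setT (fun p : (R * R) * (R * R) => mul_conjC p.1 p.2).
Proof.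
apply: measurable_fun_pair.
- exact: measurable_funD (measurable_funM _ _) (measurable_funM _ _).
- exact: measurable_funB (measurable_funM _ _) (measurable_funM _ _).
Qed.

Lemma measurable_mulI2 : measurable_fun setT (@mulI2 R).
Proof.
exact: measurable_fun_pair (measurableT_comp measurable_mulI measurable_fst)
  (measurableT_comp measurable_mulI measurable_snd).
Qed.

Lemma measurable_nth_augmentC i :
  measurable_fun setT (fun y : (R * R) * (R * R) => nth (0, 0) (augmentC y) i).
Proof.
case: i => [|[|[|[|i]]]] /=.
- exact: measurable_fst.
- exact: measurableT_comp measurable_conjC measurable_fst.
- exact: measurable_snd.
- exact: measurableT_comp measurable_conjC measurable_snd.
- by rewrite nth_nil; exact: measurable_cst.
Qed.

Lemma measurable_gram i j : measurable_fun setT (@gram R i j).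
Proof.
exact: measurableT_comp measurable_mul_conjC
  (measurable_fun_pair (measurable_nth_augmentC i) (measurable_nth_augmentC j)).
Qed.

Definition quat_of_vec4 (y : (R * R) * (R * R)) : quat R := Quat y.1.1 y.1.2 y.2.1 y.2.2.

Lemma vec4K : cancel (@vec4 R) quat_of_vec4.
Proof. by case. Qed.

Lemma measurable_basis_coord (mu1 mu2 : quat R) :
  measurable_fun setT (basis_coord mu1 mu2 \o quat_of_vec4).
Proof.
have mdot c : measurable_fun setT (fun y => qdot (quat_of_vec4 y) c).
  rewrite /qdot /=; apply: measurable_funD; [apply: measurable_funD; [apply: measurable_funD|]|];
    exact: measurable_funM _ (measurable_cst _).
by apply: measurable_fun_pair; apply: measurable_fun_pair.
Qed.

End coordinate_measurability.

Section quaternion_expectation.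
Context d (T : measurableType d) (R : realType) (P : probability T R).
Variables (mu1 mu2 : quat R).
Hypotheses (mu1_pure : pure mu1) (mu1_unit : unit_quat mu1).

Lemma measurable_basis_coord_rv (q : T -> quat R) : quat_rv q ->
  measurable_fun setT (basis_coord mu1 mu2 \o q).
Proof.
move=> [mr mi mj mk].
have -> : basis_coord mu1 mu2 \o q = (basis_coord mu1 mu2 \o quat_of_vec4) \o (@vec4 R \o q).
  by apply/funext => w /=; rewrite vec4K.
apply: measurableT_comp; first exact: measurable_basis_coord.
by apply: measurable_fun_pair; apply: measurable_fun_pair.
Qed.

Lemma basis_coord_law_mul_mu1 (q : T -> quat R) :
  quat_eq_dist P q (fun w => qmul mu1 (q w)) ->
  forall A, measurable A ->
  P ((basis_coord mu1 mu2 \o q) @^-1` A) = P ((mulI2 \o (basis_coord mu1 mu2 \o q)) @^-1` A).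
Proof.
move=> q_proper A mA.
have mB : measurable ((basis_coord mu1 mu2 \o quat_of_vec4) @^-1` A).
  by rewrite -[X in measurable X]setTI; exact: measurable_basis_coord.
have preimE (f : T -> quat R) : (basis_coord mu1 mu2 \o f) @^-1` A =
    (@vec4 R \o f) @^-1` ((basis_coord mu1 mu2 \o quat_of_vec4) @^-1` A).
  by apply/funext => w /=; rewrite vec4K.
have -> : mulI2 \o (basis_coord mu1 mu2 \o q) =
    basis_coord mu1 mu2 \o (fun w => qmul mu1 (q w)).
  by apply/funext => w /=; rewrite basis_coord_mul_mu1.
by rewrite !preimE; exact: q_proper.
Qed.

Lemma qexpect_cmu (f : T -> R * R) : measurable_fun setT (fun w => (f w).2) ->
  qexpect P (fun w => cmu mu1 (f w)) =
  cmu mu1 (fine 'E_P[fun w => (f w).1], fine 'E_P[fun w => (f w).2]).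
Proof.
move=> mf2; rewrite /qexpect /cmu /qadd /qreal /qscale /comp /= mu1_pure.
congr Quat.
- by under eq_fun do rewrite mulr0 addr0; rewrite mulr0 addr0.
all: by under eq_fun do rewrite add0r mulrC; rewrite fine_expectationZ // add0r mulrC.
Qed.

Lemma qexpect_cmu_conjC (f : T -> R * R) : measurable_fun setT (fun w => (f w).2) ->
  qexpect P (fun w => cmu mu1 (conjC (f w))) = qconj (qexpect P (fun w => cmu mu1 (f w))).
Proof.
move=> mf2; rewrite !qexpect_cmu //; last exact: measurable_funN.
by rewrite qconj_cmu // /conjC /= fine_expectationN.
Qed.

End quaternion_expectation.

Definition augmentQ (R : realType) (z1 z2 : quat R) : seq (quat R) :=
  [:: z1; qconj z1; z2; qconj z2].

Definition augcov d (T : measurableType d) (R : realType) (P : probability T R)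
    (z1 z2 : T -> quat R) (i j : nat) : quat R :=
  qexpect P (fun w => qmul (nth (qzero R) (augmentQ (z1 w) (z2 w)) i)
                           (qconj (nth (qzero R) (augmentQ (z1 w) (z2 w)) j))).

Section augmented_covariance.
Context d (T : measurableType d) (R : realType) (P : probability T R).
Variable mu1 : quat R.
Hypotheses (mu1_pure : pure mu1) (mu1_unit : unit_quat mu1).
Variable U : T -> (R * R) * (R * R).
Hypothesis mU : measurable_fun setT U.
Hypothesis U_law_mulI : forall A, measurable A -> P (U @^-1` A) = P ((mulI2 \o U) @^-1` A).
Variables z1 z2 : T -> quat R.
Hypotheses (z1E : forall w, z1 w = cmu mu1 (U w).1) (z2E : forall w, z2 w = cmu mu1 (U w).2).

Local Notation augcov := (augcov P z1 z2).

Lemma nth_augmentQ w i :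
  nth (qzero R) (augmentQ (z1 w) (z2 w)) i = cmu mu1 (nth (0, 0) (augmentC (U w)) i).
Proof.
rewrite z1E z2E; case: i => [|[|[|[|i]]]] //=; rewrite ?qconj_cmu //.
by rewrite !nth_nil (cmu0 mu1).
Qed.

Lemma augcov_gram i j : augcov i j = qexpect P (fun w => cmu mu1 (gram i j (U w))).
Proof. by congr (qexpect P _); apply/funext => w; rewrite !nth_augmentQ qmul_cmu_conj. Qed.

Let measurable_gram2 i j : measurable_fun setT (fun w => (gram i j (U w)).2).
Proof. exact: measurableT_comp measurable_snd (measurableT_comp (measurable_gram i j) mU). Qed.

Lemma augcov_in_Cmu i j : in_Cmu mu1 (augcov i j).
Proof. by rewrite augcov_gram qexpect_cmu //; do 2!eexists. Qed.

Lemma augcov_odd i j : odd (i + j) -> augcov i j = qzero R.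
Proof.
move=> ij_odd; rewrite augcov_gram qexpect_cmu // -(cmu0 mu1); congr (cmu _ (_, _)).
- apply: (fine_expectation_odd mU measurable_mulI2
    (measurableT_comp measurable_fst (measurable_gram i j)) U_law_mulI) => y.
  by rewrite /comp gram_mulI2_odd.
- apply: (fine_expectation_odd mU measurable_mulI2
    (measurableT_comp measurable_snd (measurable_gram i j)) U_law_mulI) => y.
  by rewrite /comp gram_mulI2_odd.
Qed.

Lemma augcovC i j : augcov j i = qconj (augcov i j).
Proof.
rewrite !augcov_gram -qexpect_cmu_conjC //.
by congr (qexpect P _); apply/funext => w; rewrite gramC.
Qed.

Lemma augcov_eq_gram i j k l : @gram R i j =1 gram k l -> augcov i j = augcov k l.
Proof.
by move=> gramE; rewrite !augcov_gram; congr (qexpect P _); apply/funext => w; rewrite gramE.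
Qed.

Lemma augcov_matrix :
  \matrix_(i < 4, j < 4) augcov i j =
  \matrix_(i < 4, j < 4)
    nth (qzero R) (nth [::] [:: [:: augcov 0 0; qzero R; augcov 0 2; qzero R];
                         [:: qzero R; augcov 0 0; qzero R; qconj (augcov 0 2)];
                         [:: qconj (augcov 0 2); qzero R; augcov 2 2; qzero R];
                         [:: qzero R; augcov 0 2; qzero R; augcov 2 2]] i) j.
Proof.
apply/matrixP => i j; rewrite !mxE.
case: i j => [[|[|[|[|i]]]] lti] [[|[|[|[|j]]]] ltj] //=.
all: first [by apply: augcov_odd | rewrite -?augcovC; apply: augcov_eq_gram].
all: by case=> [[a b] [c e]]; rewrite /gram /mul_conjC /=; congr pair; ring.
Qed.

End augmented_covariance.

Theorem mainTheorem4 (d : measure_display) (T : measurableType d) (R : realType)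
  (P : probability T R) (mu1 mu2 : quat R) (q z1 z2 : T -> quat R) :
  quat_basis mu1 mu2 ->
  (forall w, in_Cmu mu1 (z1 w)) -> (forall w, in_Cmu mu1 (z2 w)) ->
  (forall w, q w = qadd (z1 w) (qmul (z2 w) mu2)) ->
  quat_gaussian P q ->
  centered P q ->
  quat_eq_dist P q (fun w => qmul mu1 (q w)) ->
  let qC := fun w (i : 'I_4) =>
    nth (qzero R) [:: z1 w; qconj (z1 w); z2 w; qconj (z2 w)] i in
  let sigma2 := qexpect P (fun w => qreal (qnorm2 (z1 w))) in
  let varsigma2 := qexpect P (fun w => qreal (qnorm2 (z2 w))) in
  let omega := qexpect P (fun w => qmul (z1 w) (qconj (z2 w))) in
  let o := qzero R in
  in_Cmu mu1 omega /\
  \matrix_(i < 4, j < 4) qexpect P (fun w => qmul (qC w i) (qconj (qC w j)))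
  = \matrix_(i < 4, j < 4)
      nth o (nth [::] [:: [:: sigma2; o; omega; o];
                          [:: o; sigma2; o; qconj omega];
                          [:: qconj omega; o; varsigma2; o];
                          [:: o; omega; o; varsigma2]] i) j.
Proof.
move=> [mu1_pure mu2_pure mu1_unit mu2_unit mu12_orth] z1C z2C qE [q_rv _] _ q_proper.
pose U := basis_coord mu1 mu2 \o q.
have zE w : z1 w = cmu mu1 (U w).1 /\ z2 w = cmu mu1 (U w).2.
  by rewrite /U /= qE; exact: in_Cmu_basis_coord.
have mU : measurable_fun setT U := measurable_basis_coord_rv mu1 mu2 q_rv.
have U_law := basis_coord_law_mul_mu1 mu2 mu1_pure mu1_unit q_proper.
have z1E w := (zE w).1; have z2E w := (zE w).2.
move=> qC sigma2 varsigma2 omega o.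
have sigma2E : sigma2 = augcov P z1 z2 0 0.
  by congr (qexpect P _); apply/funext => w; rewrite qmul_conj.
have varsigma2E : varsigma2 = augcov P z1 z2 2 2.
  by congr (qexpect P _); apply/funext => w; rewrite qmul_conj.
rewrite sigma2E varsigma2E; split.
- exact: (augcov_in_Cmu P mu1_pure mu1_unit mU z1E z2E 0 2).
- exact: (augcov_matrix mu1_pure mu1_unit mU U_law z1E z2E).
Qed.
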